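(* Let $k\in\mathbb N$, $t\in(0,1)$ and $n\le 2k+2$. Then $A_{n,k,t}^{-1}$ is checkerboard: for all $i,j$, the $(i,j)$ entry of $A_{n,k,t}^{-1}$ is either $0$ or has sign $(-1)^{i-j}$. Equivalently, all minors of $A_{n,k,t}$ of order $n-1$ are nonnegative.
   Context: For $x\in\mathbb R$, $x_+=\max\{x,0\}$. For $k\in\mathbb{N}$ and $t\in(0,1)$, $A_{\infty,k,t}=(A(i,j))_{i,j\ge1}$ is the infinite Toeplitz Hessenberg matrix with $A(i,j)=a_{j-i}$ for $j\ge i$, $A(i+1,i)=1$, and $A(i,j)=0$ for $i\ge j+2$, where $(a_0,a_1,\ldots)$ is the unique sequence for which the leading principal minors satisfy $\det A(\{1,\dots,n\})=t^{(n-k-1)_+}$ for all $n\in\mathbb N$. $A_{n,k,t}$ is the leading principal $n\times n$ submatrix of $A_{\infty,k,t}$ (it is invertible since its determinant is $t^{(n-k-1)_+}>0$). *)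

From mathcomp Require Import all_boot all_order all_algebra.
Set Implicit Arguments. Unset Strict Implicit. Unset Printing Implicit Defensive.
Import Order.TTheory GRing.Theory Num.Theory.
Local Open Scope ring_scope.

(* Leading principal n x n submatrix of the infinite Toeplitz Hessenberg
   matrix A_infty with entries A(i,j) = a_(j-i) for j >= i, A(i+1,i) = 1,
   and 0 below the subdiagonal.  Indices are 0-based here (i j : 'I_n). *)
Definition toeplitz_hess {R : pzRingType} (a : nat -> R) (n : nat) : 'M[R]_n :=
  \matrix_(i < n, j < n)
    if (i <= j)%N then a (j - i)%N
    else if i == j.+1 :> nat then 1 else 0.

(* The defining property of the sequence (a_0, a_1, ...) of A_{infty,k,t}:
   det A({1..n}) = t^((n-k-1)_+) for every n >= 1.  Here (n - k.+1)%N is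
   truncated subtraction, i.e. (n-k-1)_+. *)
Definition is_Akt_seq {R : comPzRingType} (k : nat) (t : R) (a : nat -> R) : Prop :=
  forall n : nat, (0 < n)%N -> \det (toeplitz_hess a n) = t ^+ (n - k.+1)%N.

(** Expanding along the first column gives the recurrence
    [D_(m+1) = \sum_r (-1)^r a_r D_(m-r)] for the minors [D_m = det A_m].
    Since [D_m = t^((m-k-1)_+)] and [D_0 = 1], this recurrence determines
    the signed coefficients [c_r = (-1)^r a_r] one by one; for [r <= 2k+1]
    they are [c_0 = 1], [c_r = 0] for [0 < r <= k], [c_(k+1) = t - 1] and
    [c_(k+1+s) = (1-t)^2 t^(s-1)].  As [A_n] with [n <= 2k+2] only involves
    these coefficients, its inverse can be written down: its [(i,j)] entry
    is [(-1)^(i+j) (t^(-e) - [i < j])] with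
    [e = min(i+1, n-k-1, n-j, i+k+2-j)], and [t^(-e) >= 1] because [t < 1]. *)
From mathcomp Require Import all_boot all_order all_algebra.
From mathcomp Require Import zify ring.
Set Implicit Arguments.
Unset Strict Implicit.
Unset Printing Implicit Defensive.
Import Order.TTheory GRing.Theory Num.Theory.
Local Open Scope ring_scope.

Lemma mulr_signnn (R : pzRingType) (n : nat) : (-1) ^+ n * (-1) ^+ n = 1 :> R.
Proof. by rewrite -exprD -signr_odd oddD addbb. Qed.

Lemma invmx_left (R : comUnitRingType) (n : nat) (A B : 'M[R]_n) :
  B *m A = 1%:M -> invmx A = B.
Proof.
move=> BA; have [_ uA] := mulmx1_unit BA.
by rewrite -[B]mulmx1 -(mulmxV uA) mulmxA BA mul1mx.
Qed.

(* [toeplitz_hess a m] with its first row replaced by [a_s, a_(s+1), ...]: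
   the first-column minors of such a matrix are again of this shape. *)
Definition toeplitz_hess_shift {R : pzRingType} (a : nat -> R) (s m : nat)
    : 'M[R]_m :=
  \matrix_(i < m, j < m)
    if i == 0%N :> nat then a (s + j)%N
    else if (i <= j)%N then a (j - i)%N
    else if i == j.+1 :> nat then 1 else 0.

Lemma toeplitz_hess_shift0 (R : pzRingType) (a : nat -> R) (m : nat) :
  toeplitz_hess_shift a 0 m = toeplitz_hess a m.
Proof.
apply/matrixP => i j; rewrite !mxE.
by case: eqP => // ->; rewrite subn0 add0n.
Qed.

Lemma toeplitz_hess_shift_minor0 (R : pzRingType) (a : nat -> R) (s m : nat) :
  row' ord0 (col' ord0 (toeplitz_hess_shift a s m.+2)) = toeplitz_hess a m.+1.
Proof.
by apply/matrixP => i j; rewrite !mxE /= /bump /= !add1n ltnS subSS eqSS.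
Qed.

Lemma toeplitz_hess_shift_minor1 (R : pzRingType) (a : nat -> R) (s m : nat) :
  row' (lift ord0 ord0) (col' ord0 (toeplitz_hess_shift a s m.+2))
  = toeplitz_hess_shift a s.+1 m.+1.
Proof.
apply/matrixP => -[[|i] ?] j; rewrite !mxE /= /bump /= !add1n.
  by rewrite addSnnS.
by rewrite ltnS subSS !eqSS.
Qed.

Lemma det_toeplitz_hess_shift (R : comPzRingType) (a : nat -> R) (m : nat) :
  forall s, \det (toeplitz_hess_shift a s m.+1)
    = \sum_(r < m.+1) (-1) ^+ r * a (s + r)%N * \det (toeplitz_hess a (m - r)).
Proof.
elim: m => [|m IHm] s.
  rewrite [toeplitz_hess_shift _ _ 1]mx11_scalar det_mx11 big_ord1 !mxE /=.
  by rewrite addn0 expr0 mul1r det_mx00 mulr1.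
rewrite (expand_det_col _ ord0) big_ord_recl big_ord_recl big1 => [|i _];
  last first.
  by rewrite !mxE /= /bump /= mul0r.
rewrite /cofactor toeplitz_hess_shift_minor0 toeplitz_hess_shift_minor1 IHm.
rewrite [RHS]big_ord_recl !mxE /= subn0 addn0 expr0 !mul1r addr0.
rewrite /bump /= add1n expr1 !mulr_sumr; congr (_ + _).
by apply: eq_bigr => i _; rewrite exprD expr1 addSnnS subSS; ring.
Qed.

Lemma det_toeplitz_hess_recl (R : comPzRingType) (a : nat -> R) (m : nat) :
  \det (toeplitz_hess a m.+1)
    = \sum_(r < m.+1) (-1) ^+ r * a r * \det (toeplitz_hess a (m - r)).
Proof. by rewrite -toeplitz_hess_shift0 det_toeplitz_hess_shift. Qed.

Lemma big_nat_ltn_indicator (R : pzSemiRingType) (g : nat -> R) (m N : nat) :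
  (m <= N)%N -> \sum_(0 <= l < N) (l < m)%:R * g l = \sum_(0 <= l < m) g l.
Proof.
move=> hmN; rewrite (@big_cat_nat _ _ _ m 0 N) //= [X in _ + X]big1_seq ?addr0.
  by apply: eq_big_nat => l /andP[_ ->]; rewrite mul1r.
move=> l /andP[_]; rewrite mem_index_iota => /andP[hml _].
by rewrite ltnNge hml mul0r.
Qed.

Section AktCoefficients.

Variables (R : comPzRingType) (k : nat) (t : R).

Definition akt_tail (s : nat) : R :=
  if s == 0%N then t - 1 else (1 - t) ^+ 2 * t ^+ s.-1.

Definition akt_coef (r : nat) : R :=
  if (r <= k)%N then (r == 0%N)%:R else akt_tail (r - k.+1).

Lemma sum_akt_tail (m : nat) : \sum_(s < m.+1) akt_tail s = (t - 1) * t ^+ m.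
Proof.
elim: m => [|m IHm]; first by rewrite big_ord1 /akt_tail /= expr0 mulr1.
by rewrite big_ord_recr /= IHm /akt_tail /= (exprS t m); ring.
Qed.

Lemma det_toeplitz_hess_akt (a : nat -> R) : is_Akt_seq k t a ->
  forall m, \det (toeplitz_hess a m) = t ^+ (m - k.+1).
Proof. by move=> ha [|m]; [rewrite det_mx00 sub0n expr0 | apply: ha]. Qed.

Lemma akt_coef_recl (r : nat) : (r <= 2 * k + 1)%N ->
  \sum_(r' < r.+1) akt_coef r' * t ^+ (r - r' - k.+1) = t ^+ (r.+1 - k.+1).
Proof.
move=> hr; case: (leqP r k) => hrk.
  rewrite big_ord_recl /akt_coef /= mul1r big1 ?addr0 => [|i _].
    have -> : (r - 0 - k.+1 = 0)%N by lia.
    by have -> : (r.+1 - k.+1 = 0)%N by lia.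
  by rewrite /bump /= add1n ifT ?mul0r //; have := ltn_ord i; lia.
rewrite -(big_mkord xpredT (fun r' => akt_coef r' * t ^+ (r - r' - k.+1))).
rewrite (@big_cat_nat _ _ _ k.+1) //=; last by lia.
rewrite big_nat_recl //= /akt_coef /= mul1r big1_seq ?addr0 => [|i]; last first.
  by rewrite mem_index_iota => /andP[_ /andP[_ hi]]; rewrite ifT ?mul0r.
have -> : forall F : nat -> R,
    \sum_(k.+1 <= i < r.+1) F i = \sum_(0 <= i < r.+1 - k.+1) F (i + k.+1)%N.
  by move=> F; rewrite -{1}[k.+1]add0n big_addn.
rewrite (eq_big_nat _ _ (F2 := akt_tail)) => [|i /andP[_ hi]]; last first.
  have -> : (i + k.+1 <= k)%N = false by lia.
  by rewrite addnK (_ : r - (i + k.+1) - k.+1 = 0)%N ?mulr1 //; lia.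
have -> : (r.+1 - k.+1 = (r - k.+1).+1)%N by lia.
by rewrite big_mkord sum_akt_tail subn0 [in RHS]exprS; ring.
Qed.

(* The determinant recurrence, with [D_0 = 1], solves for one coefficient at
   a time; [akt_coef] satisfies the same recurrence up to index [2k+1]. *)
Lemma is_Akt_seqE (a : nat -> R) : is_Akt_seq k t a ->
  forall r, (r <= 2 * k + 1)%N -> a r = (-1) ^+ r * akt_coef r.
Proof.
move=> ha r; elim/ltn_ind: r => r IHr hr.
have := det_toeplitz_hess_recl a r.
rewrite big_ord_recr /= subnn !det_toeplitz_hess_akt // sub0n expr0 mulr1.
rewrite -(akt_coef_recl hr) big_ord_recr /= subnn sub0n expr0 mulr1.
rewrite [X in _ = X + _]
  (eq_bigr (fun i : 'I_r => akt_coef i * t ^+ (r - i - k.+1))) => [|i _].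
  by move/addrI=> ->; rewrite mulrA mulr_signnn mul1r.
have hi := ltn_ord i.
rewrite det_toeplitz_hess_akt // IHr //; last by lia.
by rewrite mulrA mulr_signnn mul1r.
Qed.

Lemma sum_akt_tail_rev (m : nat) :
  \sum_(0 <= l < m.+1) akt_tail (m - l) = (t - 1) * t ^+ m.
Proof.
rewrite big_nat_rev /= (eq_big_nat _ _ (F2 := akt_tail)) => [|l /andP[_ hl]].
  by rewrite big_mkord sum_akt_tail.
by congr akt_tail; lia.
Qed.

Lemma sum_akt_tail_rev_ltn (i m : nat) :
  \sum_(0 <= l < m.+1) (i < l)%:R * akt_tail (m - l)
    = \sum_(0 <= l < m - i) akt_tail l.
Proof.
rewrite big_nat_rev /= -(big_nat_ltn_indicator _ (_ : (m - i <= m.+1)%N));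
  last by lia.
apply: eq_big_nat => l /andP[_ hl].
have -> : (m - (0 + m.+1 - l.+1) = l)%N by lia.
by have -> : (i < 0 + m.+1 - l.+1)%N = (l < m - i)%N by lia.
Qed.

Lemma sum_akt_coef_conv (f : nat -> R) (j : nat) : (k < j)%N ->
  \sum_(0 <= l < j.+1) f l * akt_coef (j - l)
    = f j + \sum_(0 <= l < (j - k.+1).+1) f l * akt_tail (j - k.+1 - l).
Proof.
move=> hkj; rewrite big_nat_recr //= subnn /akt_coef leq0n mulr1 addrC.
congr (_ + _); rewrite (@big_cat_nat _ _ _ (j - k.+1).+1 0 j) //=; last by lia.
rewrite [X in _ + X]big1_seq ?addr0 => [|l]; last first.
  move=> /andP[_]; rewrite mem_index_iota => /andP[hl1 hl2].
  have -> : (j - l <= k)%N by lia.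
  by rewrite eqn0Ngt subn_gt0 hl2 mulr0.
apply: eq_big_nat => l /andP[_ hl].
have -> : (j - l <= k)%N = false by lia.
by have -> : (j - l - k.+1 = j - k.+1 - l)%N by lia.
Qed.

End AktCoefficients.

Lemma natr_ltnSB (R : pzRingType) (i j : nat) :
  (i < j.+1)%N%:R - (i < j)%N%:R = (i == j)%:R :> R.
Proof.
by rewrite ltnS leq_eqVlt; case: ltngtP => //= _; rewrite ?subrr ?subr0.
Qed.

Lemma exprVDr (R : fieldType) (t : R) (x y : nat) : t != 0 ->
  t^-1 ^+ (x + y) * t ^+ y = t^-1 ^+ x.
Proof.
move=> t0; rewrite exprD -mulrA [X in _ * (X * _)]exprVn mulVf ?mulr1 //.
by rewrite expf_neq0.
Qed.

Lemma exprVDl (R : fieldType) (t : R) (x y : nat) : t != 0 ->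
  t^-1 ^+ y * t ^+ (x + y) = t ^+ x.
Proof.
move=> t0; rewrite exprD mulrCA exprVn mulVf ?mulr1 //.
by rewrite expf_neq0.
Qed.

Section AktInverse.

Variables (R : fieldType) (t : R) (k n : nat).

Definition akt_inv_exp (i j : nat) : nat :=
  minn (minn i.+1 (n - k.+1)) (minn (n - j) (i.+1 + k.+1 - j)).

Definition akt_inv_abs (i j : nat) : R :=
  t^-1 ^+ akt_inv_exp i j - (i < j)%N%:R.

Definition akt_inv : 'M[R]_n :=
  \matrix_(i < n, j < n) ((-1) ^+ (i + j)%N * akt_inv_abs i j).

Lemma akt_inv_abs_n (i : nat) : (i < n)%N -> akt_inv_abs i n = 0.
Proof.
move=> hi; rewrite /akt_inv_abs hi (_ : akt_inv_exp i n = 0%N) ?subrr //.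
by rewrite /akt_inv_exp; lia.
Qed.

Lemma akt_inv_abs_recl_head (i j : nat) : (j <= k)%N ->
  \sum_(0 <= l < j.+1) akt_inv_abs i l * akt_coef k t (j - l)
    - akt_inv_abs i j.+1 = (i == j)%:R.
Proof.
move=> hjk; rewrite big_nat_recr //= subnn /akt_coef leq0n eqxx mulr1.
rewrite big1_seq ?add0r => [|l /andP[_]]; last first.
  rewrite mem_index_iota => /andP[_ hl].
  have -> : (j - l <= k)%N by lia.
  by rewrite eqn0Ngt subn_gt0 hl mulr0.
rewrite /akt_inv_abs (_ : akt_inv_exp i j.+1 = akt_inv_exp i j); last first.
  by rewrite /akt_inv_exp; lia.
by rewrite -(natr_ltnSB R i j); ring.
Qed.

Lemma akt_inv_abs_recl_tail (i j : nat) : t != 0 -> (n <= 2 * k + 2)%N ->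
  (j < n)%N -> (k < j)%N ->
  \sum_(0 <= l < j.+1) akt_inv_abs i l * akt_coef k t (j - l)
    - akt_inv_abs i j.+1 = (i == j)%:R.
Proof.
move=> t0 hn hj hkj; rewrite sum_akt_coef_conv //.
set J := (j - k.+1)%N; set U := t^-1 ^+ minn i.+1 (n - k.+1).
rewrite (eq_big_nat _ _
    (F2 := fun l => (U - (i < l)%N%:R) * akt_tail t (J - l)))
  => [|l /andP[_ hl]]; last first.
  by rewrite /akt_inv_abs (_ : akt_inv_exp i l = minn i.+1 (n - k.+1)) //;
    rewrite /akt_inv_exp /J in hl *; lia.
under eq_bigr do rewrite mulrBl.
rewrite sumrB -mulr_sumr sum_akt_tail_rev sum_akt_tail_rev_ltn /akt_inv_abs /U.
case: (ltnP i J) => hiJ.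
  have -> : (J - i = (J - i.+1).+1)%N by lia.
  rewrite big_mkord sum_akt_tail.
  have -> : akt_inv_exp i j = 0%N by rewrite /akt_inv_exp /J; lia.
  have -> : akt_inv_exp i j.+1 = 0%N by rewrite /akt_inv_exp /J; lia.
  have -> : minn i.+1 (n - k.+1) = i.+1 by rewrite /J; lia.
  have -> : (i == j) = false by apply/negbTE; rewrite /J in hiJ; lia.
  have -> : (i < j)%N by rewrite /J in hiJ; lia.
  have -> : (i < j.+1)%N by rewrite /J in hiJ; lia.
  rewrite mulrCA (_ : J = J - i.+1 + i.+1)%N; last by lia.
  by rewrite exprVDl // addnK /=; ring.
rewrite big_geq; last by lia.
set m := minn (i - J) (n - j - 1).
have -> : akt_inv_exp i j = m.+1 by rewrite /akt_inv_exp /m /J; lia.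
have -> : akt_inv_exp i j.+1 = m by rewrite /akt_inv_exp /m /J; lia.
have -> : minn i.+1 (n - k.+1) = (m.+1 + J)%N by rewrite /m /J; lia.
rewrite mulrCA exprVDr // -(natr_ltnSB R i j) exprS.
by field.
Qed.

Lemma akt_inv_abs_recl (i j : nat) :
  t != 0 -> (n <= 2 * k + 2)%N -> (j < n)%N ->
  \sum_(0 <= l < j.+1) akt_inv_abs i l * akt_coef k t (j - l)
    - akt_inv_abs i j.+1 = (i == j)%:R.
Proof.
move=> t0 hn hj; case: (leqP j k) => [|hkj]; first exact: akt_inv_abs_recl_head.
exact: akt_inv_abs_recl_tail.
Qed.

Lemma akt_inv_mulmx (a : nat -> R) : t != 0 -> is_Akt_seq k t a ->
  (n <= 2 * k + 2)%N -> akt_inv *m toeplitz_hess a n = 1%:M.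
Proof.
move=> t0 ha hn; apply/matrixP => i j; rewrite !mxE.
pose F (l : nat) := (-1) ^+ (i + l) * akt_inv_abs i l *
  (if (l <= j)%N then a (j - l)%N else if l == j.+1 then 1 else 0).
rewrite (eq_bigr (fun l : 'I_n => F l)) => [|l _]; last by rewrite !mxE.
rewrite -(big_mkord xpredT F).
have hi := ltn_ord i; have hj := ltn_ord j.
(* Column [j] of [A_n] vanishes below row [j+1]; if [j+1 = n], the missing
   term [l = n] of the identity [akt_inv_abs_recl] is zero anyway. *)
have -> : \sum_(0 <= l < n) F l = \sum_(0 <= l < j.+2) F l.
  case: (ltnP j.+1 n) => hjn.
    rewrite (@big_cat_nat _ _ _ j.+2 0 n) //= [X in _ + X]big1_seq ?addr0 //.
    move=> l /andP[_]; rewrite mem_index_iota => /andP[hl _].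
    rewrite /F; have -> : (l <= j)%N = false by lia.
    by rewrite (gtn_eqF hl) mulr0.
  have -> : j.+2 = n.+1 by lia.
  by rewrite big_nat_recr //= /F akt_inv_abs_n // mulr0 mul0r addr0.
rewrite big_nat_recr //= [F j.+1]/F ltnn eqxx mulr1.
rewrite (eq_big_nat _ _ (F2 := fun l =>
    (-1) ^+ (i + j) * (akt_inv_abs i l * akt_coef k t (j - l))))
  => [|l /andP[_ hl]]; last first.
  rewrite ltnS in hl; rewrite /F hl (is_Akt_seqE ha); last by lia.
  have -> : (-1) ^+ (i + j) = (-1) ^+ (i + l) * (-1) ^+ (j - l) :> R.
    by rewrite -exprD -addnA subnKC.
  ring.
rewrite -mulr_sumr addnS exprS mulN1r mulNr -mulrBr akt_inv_abs_recl //.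
case: (eqVneq i j) => [->|hij].
  by rewrite !eqxx -signr_odd addnn odd_double expr0 mulr1.
by rewrite (_ : (i == j :> nat) = false) ?mulr0 //; apply/negbTE.
Qed.

End AktInverse.

Lemma akt_inv_abs_ge0 (R : realFieldType) (t : R) (k n i j : nat) :
  0 < t -> t <= 1 -> 0 <= akt_inv_abs t k n i j.
Proof.
move=> t_gt0 t_le1; have t1 : 1 <= t^-1 by rewrite invf_ge1.
have := exprn_ege1 (akt_inv_exp k n i j) t1.
rewrite /akt_inv_abs; case: (i < j)%N => /= h; first by rewrite subr_ge0.
by rewrite subr0 (le_trans ler01 h).
Qed.

Theorem proposition4 (R : realFieldType) (k : nat) (t : R)
    (ht0 : 0 < t) (ht1 : t < 1) (a : nat -> R) (ha : is_Akt_seq k t a)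
    (n : nat) (hn : (n <= 2 * k + 2)%N) :
  forall i j : 'I_n,
    invmx (toeplitz_hess a n) i j = 0 \/
    0 < (-1) ^+ (i + j)%N * invmx (toeplitz_hess a n) i j.
Proof.
move=> i j.
have t0 : t != 0 by rewrite gt_eqF.
rewrite (invmx_left (akt_inv_mulmx t0 ha hn)) !mxE mulrA mulr_signnn mul1r.
have := akt_inv_abs_ge0 k n i j ht0 (ltW ht1).
by rewrite le_eqVlt => /orP[/eqP <-|]; [left; rewrite mulr0 | right].
Qed.
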